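(* Let $C\in\mathbb{R}^{n\times n}$ be invertible and consider the utility $U(\theta,\omega) = \theta^T C\omega + U'(\theta,\omega)$, where $U'$ is differentiable and satisfies, at every point $(\theta,\omega)$ at which it is evaluated by the dynamics below, $$\left\|\begin{bmatrix}\nabla_\theta U'(\theta,\omega)\\ \nabla_\omega U'(\theta,\omega)\end{bmatrix}\right\|_2 \le \alpha := c\, r^{1/3} m^{-1/6} H^{5/2} \log^{1/2} m,$$ for a constant $c>0$, where $m$ is the width and $H$ the depth of the neural networks parameterizing the players and $r$ bounds the distance of the weights from their initialization. Let $(\theta_t,\omega_t)_{t\ge 0}$ be a sequence satisfying the Implicit Update (IU) dynamics $$\theta_{t+1} = \theta_t - \eta\nabla_\theta U(\theta_{t+1},\omega_{t+1}),\qquad \omega_{t+1} = \omega_t + \eta\nabla_\omega U(\theta_{t+1},\omega_{t+1})$$ with step size $\eta = 1/\sqrt{\lambda_{\max}(CC^T)}$. Then the IU dynamics converges to a neighborhood of the optimum $(0,0)$ of size $$O\!\left(\frac{1}{1-1/\sqrt{2}}\, r^{1/3} m^{-1/6} H^{5/2}\log^{1/2} m\, \frac{\sqrt{\lambda_{\max}(CC^T)}}{\lambda_{\min}(CC^T)}\right),$$ i.e. $\limsup_{t\to\infty}\left\|\begin{bmatrix}\theta_t\\ \omega_t\end{bmatrix}\right\|_2$ is bounded by a quantity of this order.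
   Context: Setting: both players of a GAN-type min-max game are overparameterized neural networks; after the reduction of a game linear in both players to the form $\theta^T C\omega$ (with $C$ invertible, equilibrium at the origin), the finite-width utility is $\theta^T C\omega$ plus a perturbation $U'$ whose gradient is bounded by the neural-tangent-kernel linearization error $O(r^{1/3}m^{-1/6}H^{5/2}\log^{1/2}m)$ (which holds with probability at least $1-e^{-\Omega(\log^2 m)}$ for networks of depth $H$ and sufficiently large width $m$ whose weights stay within distance $r$ of initialization). $\theta$ is the minimizing player and $\omega$ the maximizing player. $\lambda_{\max}(\cdot),\lambda_{\min}(\cdot)$ denote largest and smallest eigenvalues. *)

From HB Require Import structures.
From mathcomp Require Import all_boot all_order all_algebra.
From mathcomp Require Import all_classical all_reals all_analysis.
Set Implicit Arguments. Unset Strict Implicit. Unset Printing Implicit Defensive.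
Import Order.TTheory GRing.Theory Num.Theory.
Import numFieldNormedType.Exports.
Local Open Scope ring_scope.

Definition norm2 (R : realType) (n : nat) (v : 'rV[R]_n) : R :=
  Num.sqrt (\sum_(i < n) (v ord0 i) ^+ 2).

Definition grad (R : realType) (n : nat) (f : 'rV[R]_n -> R) (x : 'rV[R]_n)
  : 'rV[R]_n :=
  \row_(i < n) ('D_(delta_mx ord0 i) f x).

Definition grad_theta (R : realType) (n : nat) (U : 'rV[R]_n -> 'rV[R]_n -> R)
  (th om : 'rV[R]_n) : 'rV[R]_n := grad (fun x => U x om) th.
Definition grad_omega (R : realType) (n : nat) (U : 'rV[R]_n -> 'rV[R]_n -> R)
  (th om : 'rV[R]_n) : 'rV[R]_n := grad (fun y => U th y) om.

Definition is_lambda_max (R : realType) (n : nat) (A : 'M[R]_n) (l : R) : Prop :=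
  eigenvalue A l /\ (forall a, eigenvalue A a -> a <= l).
Definition is_lambda_min (R : realType) (n : nat) (A : 'M[R]_n) (l : R) : Prop :=
  eigenvalue A l /\ (forall a, eigenvalue A a -> l <= a).

Definition utility (R : realType) (n : nat) (C : 'M[R]_n)
  (U' : 'rV[R]_n -> 'rV[R]_n -> R) (th om : 'rV[R]_n) : R :=
  (th *m C *m om^T) ord0 ord0 + U' th om.

Definition ntk_rate (R : realType) (r : R) (m H : nat) : R :=
  r `^ (1 / 3) * (m%:R) `^ (- (1 / 6)) * (H%:R) `^ (5 / 2)
    * Num.sqrt (ln (m%:R : R)).

From HB Require Import structures.
From mathcomp Require Import all_boot all_order all_algebra.
From mathcomp Require Import all_classical all_reals all_analysis.
From mathcomp Require Import ring lra.
Import Order.TTheory GRing.Theory Num.Theory.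
Import numFieldNormedType.Exports.

Set Implicit Arguments.
Unset Strict Implicit.
Unset Printing Implicit Defensive.

Local Open Scope ring_scope.

(* Write z_t = (theta_t, omega_t) and eta = 1 / sqrt(lambda_max).  The implicit
   update says  theta_t - eta g_theta = theta_{t+1} + eta omega_{t+1} C^T  and
   omega_t + eta g_omega = omega_{t+1} - eta theta_{t+1} C, where g is the
   gradient of the perturbation U'.  Because the game is bilinear the cross
   terms cancel, so the squared norm of the right-hand side is
   |z_{t+1}|^2 + eta^2 (|theta_{t+1} C|^2 + |omega_{t+1} C^T|^2)
   >= q^2 |z_{t+1}|^2  with  q = sqrt(1 + eta^2 lambda_min) > 1, since
   lambda_min (the minimum of the Rayleigh quotient of C C^T, which has the
   same spectrum as C^T C) bounds both quadratic forms.  Hence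
   q |z_{t+1}| <= |z_t| + eta alpha, so that
   limsup |z_t| <= eta alpha / (q - 1) = alpha (q + 1) sqrt(lambda_max) / lambda_min,
   and q + 1 <= sqrt 2 + 1 <= 1 / (1 - 1 / sqrt 2). *)

Definition vdot (R : comPzRingType) (n : nat) (u v : 'rV[R]_n) : R :=
  (u *m v^T) ord0 ord0.

Section Vdot.
Variables (R : comPzRingType) (n : nat).
Implicit Types (u v w : 'rV[R]_n) (k : R).

Lemma vdotE u v : vdot u v = \sum_i u ord0 i * v ord0 i.
Proof. by rewrite /vdot mxE; apply: eq_bigr => i _; rewrite mxE. Qed.

Lemma vdotC u v : vdot u v = vdot v u.
Proof. by rewrite !vdotE; apply: eq_bigr => i _; rewrite mulrC. Qed.

Lemma vdotDl u v w : vdot (u + v) w = vdot u w + vdot v w.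
Proof. by rewrite /vdot mulmxDl mxE. Qed.

Lemma vdotDr u v w : vdot w (u + v) = vdot w u + vdot w v.
Proof. by rewrite vdotC vdotDl !(vdotC _ w). Qed.

Lemma vdotZl k u v : vdot (k *: u) v = k * vdot u v.
Proof. by rewrite /vdot -scalemxAl mxE. Qed.

Lemma vdotZr k u v : vdot u (k *: v) = k * vdot u v.
Proof. by rewrite vdotC vdotZl vdotC. Qed.

Lemma vdotNl u v : vdot (- u) v = - vdot u v.
Proof. by rewrite -scaleN1r vdotZl mulN1r. Qed.

Lemma vdotNr u v : vdot u (- v) = - vdot u v.
Proof. by rewrite vdotC vdotNl vdotC. Qed.

Lemma vdotBl u v w : vdot (u - v) w = vdot u w - vdot v w.
Proof. by rewrite vdotDl vdotNl. Qed.

Lemma vdotBr u v w : vdot w (u - v) = vdot w u - vdot w v.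
Proof. by rewrite vdotDr vdotNr. Qed.

Lemma vdot0l v : vdot 0 v = 0.
Proof. by rewrite /vdot mul0mx mxE. Qed.

Lemma vdot_mulmxl u v (A : 'M[R]_n) : vdot (u *m A) v = vdot u (v *m A^T).
Proof. by rewrite /vdot trmx_mul trmxK mulmxA. Qed.

Lemma vdot_row_mx m (u v : 'rV[R]_n) (u' v' : 'rV[R]_m) :
  vdot (row_mx u u') (row_mx v v') = vdot u v + vdot u' v'.
Proof. by rewrite /vdot tr_row_mx mul_row_col mxE. Qed.

Lemma vdot_skew_step (C : 'M[R]_n) (e : R) (x y : 'rV[R]_n) :
  let w := row_mx (x + e *: (y *m C^T)) (y - e *: (x *m C)) in
  vdot w w = vdot x x + vdot y y
             + e ^+ 2 * (vdot (x *m C) (x *m C) + vdot (y *m C^T) (y *m C^T)).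
Proof.
rewrite /= vdot_row_mx !(vdotDl, vdotDr, vdotNl, vdotNr, vdotZl, vdotZr).
rewrite (vdotC (y *m C^T) x) -vdot_mulmxl (vdotC y); ring.
Qed.

End Vdot.

Section VdotReal.
Variables (R : realDomainType) (n : nat).
Implicit Types (u : 'rV[R]_n).

Lemma vdot_ge0 u : 0 <= vdot u u.
Proof. by rewrite vdotE; apply: sumr_ge0 => i _; rewrite -expr2 sqr_ge0. Qed.

Lemma vdot_eq0 u : (vdot u u == 0) = (u == 0).
Proof.
apply/idP/eqP => [|->]; last by rewrite vdot0l.
rewrite vdotE psumr_eq0 => [/allP u0|i _]; last by rewrite -expr2 sqr_ge0.
apply/rowP => i; rewrite mxE; apply/eqP.
by rewrite -sqrf_eq0 expr2; exact: u0 (mem_index_enum i).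
Qed.

Lemma vdot_gt0 u : (0 < vdot u u) = (u != 0).
Proof. by rewrite lt_def vdot_ge0 vdot_eq0 andbT. Qed.

End VdotReal.

Section Norm2.
Variables (R : realType) (n : nat).
Implicit Types (u v : 'rV[R]_n).

Lemma norm2E u : norm2 u = Num.sqrt (vdot u u).
Proof. by rewrite /norm2 vdotE; congr Num.sqrt; apply: eq_bigr => i _; rewrite expr2. Qed.

Lemma norm2_ge0 u : 0 <= norm2 u.
Proof. by rewrite norm2E sqrtr_ge0. Qed.

Lemma norm2_sqr u : norm2 u ^+ 2 = vdot u u.
Proof. by rewrite norm2E sqr_sqrtr // vdot_ge0. Qed.

Lemma vdot_le_norm2 u v : vdot u v <= norm2 u * norm2 v.
Proof.
have [->|u0] := eqVneq u 0; first by rewrite vdot0l mulr_ge0 ?norm2_ge0.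
have uu_gt0 : 0 < vdot u u by rewrite vdot_gt0.
have := vdot_ge0 (vdot u u *: v - vdot u v *: u).
rewrite !(vdotBl, vdotBr, vdotZl, vdotZr) (vdotC v u) => proj_ge0.
have uv_sqr : vdot u v ^+ 2 <= vdot u u * vdot v v by nra.
apply: le_trans (ler_norm _) _.
rewrite -[leLHS]sqrtr_sqr !norm2E -sqrtrM ?vdot_ge0 // ler_sqrt //.
by rewrite mulr_ge0 // vdot_ge0.
Qed.

Lemma norm2D u v : norm2 (u + v) <= norm2 u + norm2 v.
Proof.
rewrite -(ler_pXn2r (_ : (0 < 2)%N)) ?nnegrE ?addr_ge0 ?norm2_ge0 //.
rewrite sqrrD !norm2_sqr vdotDl !vdotDr (vdotC v u).
have := vdot_le_norm2 u v; lra.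
Qed.

Lemma norm2Z (k : R) u : norm2 (k *: u) = `|k| * norm2 u.
Proof. by rewrite !norm2E vdotZl vdotZr mulrA sqrtrM ?sqr_ge0 // sqrtr_sqr. Qed.

End Norm2.

Lemma vdot_normalize (R : realType) n (u : 'rV[R]_n) : u != 0 ->
  vdot ((norm2 u)^-1 *: u) ((norm2 u)^-1 *: u) = 1.
Proof.
move=> u0; rewrite vdotZl vdotZr mulrA -expr2 exprVn norm2_sqr mulVf //.
by rewrite vdot_eq0.
Qed.

Lemma quadratic_ge0_linear_coef_eq0 (R : realFieldType) (b c : R) :
  (forall e, 0 <= e * b + e ^+ 2 * c) -> b = 0.
Proof.
move=> quad_ge0; apply/eqP; apply: contraT => b_neq0.
pose d := `|c| + 1; have d_gt0 : 0 < d by rewrite ltr_wpDl.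
pose e := - b / d; have ed : e * d = - b by rewrite divfK ?gt_eqF.
have := mulr_ge0 (ltW (exprn_gt0 2 d_gt0)) (quad_ge0 e).
have -> : d ^+ 2 * (e * b + e ^+ 2 * c) = d * (e * d) * b + (e * d) ^+ 2 * c.
  by ring.
have b2_gt0 : 0 < b ^+ 2 by rewrite exprn_even_gt0.
have c_lt_d : c < d by rewrite /d ltr_pwDr ?ler_norm.
rewrite ed; nra.
Qed.

(* At [x + e *: (x *m B)] the form is [2 e |x *m B|^2 + O(e^2)], so it would
   become negative for small [e < 0]. *)
Lemma psd_form_kernel (R : realFieldType) n (B : 'M[R]_n) (x : 'rV[R]_n) :
  B^T = B -> (forall y, 0 <= vdot (y *m B) y) -> vdot (x *m B) x = 0 ->
  x *m B = 0.
Proof.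
move=> BT B_psd xBx; set y := x *m B.
suff yy0 : vdot y y = 0 by apply/eqP; rewrite -vdot_eq0 yy0.
have expand e : vdot ((x + e *: y) *m B) (x + e *: y)
                = e * (2 * vdot y y) + e ^+ 2 * vdot (y *m B) y.
  rewrite mulmxDl -scalemxAl !(vdotDl, vdotDr, vdotZl, vdotZr) xBx -/y.
  by rewrite (vdot_mulmxl y x) BT -/y; ring.
have /eqP : 2 * vdot y y = 0.
  by apply: (@quadratic_ge0_linear_coef_eq0 _ _ (vdot (y *m B) y)) => e; rewrite -expand.
by rewrite mulf_eq0 pnatr_eq0 => /eqP.
Qed.

Lemma quad_continuous (R : realType) n (A : 'M[R]_n) :
  continuous (fun x : 'rV[R]_n => vdot (x *m A) x).
Proof.
move=> x; apply: differentiable_continuous.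
have -> : (fun x : 'rV[R]_n => vdot (x *m A) x) =
    \sum_(j < n) ((\sum_(k < n) ((fun y : 'rV[R]_n => y ord0 k) * cst (A k j)))
                  * (fun y : 'rV[R]_n => y ord0 j)).
  apply/funext => y; rewrite vdotE fct_sumE; apply: eq_bigr => j _.
  by rewrite /= mxE fct_sumE.
apply: differentiable_sum => j; apply: differentiableM; last exact: differentiable_coord.
apply: differentiable_sum => k; apply: differentiableM; first exact: differentiable_coord.
exact: differentiable_cst.
Qed.

Lemma unit_sphere_compact (R : realType) n :
  compact [set x : 'rV[R]_n | vdot x x = 1]%classic.
Proof.
have cube_compact := rV_compact (fun _ : 'I_n => @segment_compact R (-1) 1).
apply: subclosed_compact cube_compact _ => [|x /= xx1 i].
  have -> : [set x : 'rV[R]_n | vdot x x = 1]%classic =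
            ((fun x => vdot (x *m 1%:M) x) @^-1` [set 1])%classic.
    by apply/funext => x /=; rewrite mulmx1.
  apply: preimage_closed => [y _|]; [exact: quad_continuous | exact: closed_eq].
have : x ord0 i ^+ 2 <= 1.
  rewrite -xx1 vdotE (bigD1 i) //= -expr2 lerDl.
  by apply: sumr_ge0 => j _; rewrite -expr2 sqr_ge0.
by rewrite in_itv /= => xi2_le1; apply/andP; split; nra.
Qed.

Lemma unit_sphere_min_quad (R : realType) n (A : 'M[R]_n) (v : 'rV[R]_n) :
  v != 0 ->
  exists2 x0, vdot x0 x0 = 1 &
    forall x, vdot x x = 1 -> vdot (x0 *m A) x0 <= vdot (x *m A) x.
Proof.
move=> v0; have sphere_n0 : ([set x : 'rV[R]_n | vdot x x = 1] !=set0)%classic.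
  by exists ((norm2 v)^-1 *: v); exact: vdot_normalize.
have [x0 x0_unit x0_min] := EVT_min_rV sphere_n0 (@unit_sphere_compact R n)
  (continuous_subspaceT (@quad_continuous R n A)).
by exists x0 => [|x x_unit]; [move: x0_unit; rewrite inE | apply: x0_min; rewrite inE].
Qed.

Lemma rayleigh_min_eigenvalue (R : realType) n (A : 'M[R]_n) (v : 'rV[R]_n) :
  A^T = A -> v != 0 ->
  exists mu, eigenvalue A mu /\ forall x, mu * vdot x x <= vdot (x *m A) x.
Proof.
move=> AT v0; have [x0 x0_unit x0_min] := unit_sphere_min_quad A v0.
set mu := vdot (x0 *m A) x0.
have mu_le x : mu * vdot x x <= vdot (x *m A) x.
  have [->|x0'] := eqVneq x 0; first by rewrite vdot0l mul0mx vdot0l mulr0.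
  have := x0_min _ (vdot_normalize x0').
  rewrite -scalemxAl vdotZl vdotZr mulrA -expr2 exprVn norm2_sqr.
  by rewrite ler_pdivlMl ?vdot_gt0 // mulrC.
exists mu; split => //; set B := A - mu%:M.
have quadB x : vdot (x *m B) x = vdot (x *m A) x - mu * vdot x x.
  by rewrite mulmxBr mul_mx_scalar vdotBl vdotZl.
have x0B : x0 *m B = 0.
  apply: psd_form_kernel => [|y|]; first by rewrite linearB /= tr_scalar_mx AT.
    by rewrite quadB subr_ge0.
  by rewrite quadB x0_unit mulr1 subrr.
apply/eigenvalueP; exists x0; last by rewrite -vdot_eq0 x0_unit oner_neq0.
by apply/eqP; rewrite -subr_eq0 -mul_mx_scalar -mulmxBr -/B x0B.
Qed.

Lemma lambda_min_le_quad (R : realType) n (A : 'M[R]_n) l :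
  A^T = A -> is_lambda_min A l -> forall x, l * vdot x x <= vdot (x *m A) x.
Proof.
move=> AT [/eigenvalueP[v _ v0] l_min] x.
have [mu [mu_eig mu_le]] := rayleigh_min_eigenvalue AT v0.
by apply: le_trans (mu_le x); rewrite ler_wpM2r ?vdot_ge0 ?l_min.
Qed.

Lemma eigenvalue_mulmxC (F : fieldType) n (A B : 'M[F]_n) a :
  B \in unitmx -> eigenvalue (A *m B) a -> eigenvalue (B *m A) a.
Proof.
move=> Bu /eigenvalueP[v vAB v0]; apply/eigenvalueP; exists (v *m invmx B).
  by rewrite mulmxA mulmxKV // -(mulmxK Bu (v *m A)) -(mulmxA v) vAB -scalemxAl.
by apply: contra v0 => /eqP vB0; rewrite -(mulmxKV Bu v) vB0 mul0mx.
Qed.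

Lemma is_lambda_min_mulmxC (R : realType) n (A B : 'M[R]_n) l :
  A \in unitmx -> B \in unitmx -> is_lambda_min (A *m B) l -> is_lambda_min (B *m A) l.
Proof.
move=> Au Bu [l_eig l_min]; split; first exact: eigenvalue_mulmxC.
by move=> a /(eigenvalue_mulmxC Au)/l_min.
Qed.

Lemma lambda_min_gram (R : realType) n (C : 'M[R]_n) l :
  C \in unitmx -> is_lambda_min (C *m C^T) l ->
  [/\ 0 < l, forall x, l * vdot x x <= vdot (x *m C) (x *m C)
           & forall x, l * vdot x x <= vdot (x *m C^T) (x *m C^T)].
Proof.
move=> Cu l_min; have CTu : C^T \in unitmx by rewrite unitmx_tr.
have gramE (M : 'M[R]_n) x : vdot (x *m (M *m M^T)) x = vdot (x *m M) (x *m M).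
  by rewrite mulmxA vdot_mulmxl trmxK.
split=> [|x|x]; last 2 first.
- by rewrite -gramE; apply: (lambda_min_le_quad _ l_min); rewrite trmx_mul trmxK.
- have CTC_sym : (C^T *m C)^T = C^T *m C by rewrite trmx_mul trmxK.
  have := lambda_min_le_quad CTC_sym (is_lambda_min_mulmxC Cu CTu l_min) x.
  by rewrite mulmxA vdot_mulmxl.
have [/eigenvalueP[v vCC v0] _] := l_min.
have vC0 : v *m C != 0.
  by apply: contra v0 => /eqP vC0; rewrite -(mulmxK Cu v) vC0 mul0mx.
have := vdot_gt0 (v *m C); rewrite vC0 -gramE vCC vdotZl.
by rewrite pmulr_lgt0 // vdot_gt0.
Qed.

Lemma derive_additive_scalable (R : numFieldType) (V W : normedModType R)
    (f : V -> W) (a v : V) :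
  {morph f : x y / x + y} -> (forall (k : R) x, f (k *: x) = k *: f x) ->
  derivable f a v /\ 'D_v f a = f v.
Proof.
move=> fD fZ.
have quotientE :
    \forall h \near dnbhs (0 : R), h^-1 *: (f (h *: v + a) - f a) = f v.
  near=> h; have h0 : h != 0 by near: h; exact: nbhs_dnbhs_neq.
  by rewrite fD addrK fZ scalerA mulVf // scale1r.
split; first exact: is_cvg_near_cst quotientE.
by apply: lim_near_cst quotientE; exact: norm_hausdorff.
Unshelve. all: by end_near. Qed.

Section PartialDerivatives.
Variables (R : realType) (V W : normedModType R) (U : V -> W -> R).
Hypothesis dU : forall p : V * W, differentiable (fun q : V * W => U q.1 q.2) p.

Lemma derivable_partial_l x y v : derivable (fun x => U x y) x v.
Proof.
apply: diff_derivable; apply: (@differentiable_comp _ _ _ _ (fun x => (x, y))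
  (fun q : V * W => U q.1 q.2)); last exact: dU.
by apply: differentiable_pair; [exact: ex_diff | exact: differentiable_cst].
Qed.

Lemma derivable_partial_r x y v : derivable (fun y => U x y) y v.
Proof.
apply: diff_derivable; apply: (@differentiable_comp _ _ _ _ (fun y => (x, y))
  (fun q : V * W => U q.1 q.2)); last exact: dU.
by apply: differentiable_pair; [exact: differentiable_cst | exact: ex_diff].
Qed.

End PartialDerivatives.

Section Gradients.
Variables (R : realType) (n : nat).

Lemma gradD (f g : 'rV[R]_n -> R) x :
  (forall i, derivable f x (delta_mx ord0 i)) ->
  (forall i, derivable g x (delta_mx ord0 i)) ->
  grad (fun x => f x + g x) x = grad f x + grad g x.
Proof. by move=> df dg; apply/rowP => i; rewrite !mxE deriveD. Qed.

Lemma derive_bilinear_l (A : 'M[R]_n) (x y v : 'rV[R]_n) :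
  let f := fun x => (x *m A *m y^T) ord0 ord0 in
  derivable f x v /\ 'D_v f x = f v.
Proof.
apply: derive_additive_scalable => [u w|k u]; first by rewrite !mulmxDl mxE.
by rewrite -!scalemxAl mxE.
Qed.

Lemma derive_bilinear_r (A : 'M[R]_n) (x y v : 'rV[R]_n) :
  let f := fun y => (x *m A *m y^T) ord0 ord0 in
  derivable f y v /\ 'D_v f y = f v.
Proof.
apply: derive_additive_scalable => [u w|k u]; first by rewrite linearD mulmxDr mxE.
by rewrite linearZ -scalemxAr mxE.
Qed.

Lemma grad_bilinear_l (A : 'M[R]_n) (x y : 'rV[R]_n) :
  grad (fun x => (x *m A *m y^T) ord0 ord0) x = y *m A^T.
Proof.
apply/rowP => i; rewrite mxE (derive_bilinear_l A x y _).2 -mulmxA -rowE !mxE.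
by apply: eq_bigr => j _; rewrite !mxE mulrC; congr (y _ _ * _); exact: val_inj.
Qed.

Lemma grad_bilinear_r (A : 'M[R]_n) (x y : 'rV[R]_n) :
  grad (fun y => (x *m A *m y^T) ord0 ord0) y = x *m A.
Proof.
apply/rowP => i; rewrite mxE (derive_bilinear_r A x y _).2 trmx_delta -colE !mxE.
by apply: eq_bigr => j _; congr (x _ _ * _); exact: val_inj.
Qed.

Variables (C : 'M[R]_n) (U' : 'rV[R]_n -> 'rV[R]_n -> R).
Hypothesis dU : forall p : 'rV[R]_n * 'rV[R]_n,
  differentiable (fun q : 'rV[R]_n * 'rV[R]_n => U' q.1 q.2) p.

Lemma grad_theta_utility th om :
  grad_theta (utility C U') th om = om *m C^T + grad_theta U' th om.
Proof.
rewrite /grad_theta /utility gradD ?grad_bilinear_l // => i.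
  exact: (derive_bilinear_l C th om _).1.
exact: derivable_partial_l.
Qed.

Lemma grad_omega_utility th om :
  grad_omega (utility C U') th om = th *m C + grad_omega U' th om.
Proof.
rewrite /grad_omega /utility gradD ?grad_bilinear_r // => i.
  exact: (derive_bilinear_r C th om _).1.
exact: derivable_partial_r.
Qed.

End Gradients.

Lemma implicit_update_contraction (R : realType) n (C : 'M[R]_n) (l eta alpha : R)
    (th om th' om' gth gom : 'rV[R]_n) :
  0 <= l -> 0 <= eta ->
  (forall x, l * vdot x x <= vdot (x *m C) (x *m C)) ->
  (forall x, l * vdot x x <= vdot (x *m C^T) (x *m C^T)) ->
  norm2 (row_mx gth gom) <= alpha ->
  th' = th - eta *: (om' *m C^T + gth) ->
  om' = om + eta *: (th' *m C + gom) ->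
  Num.sqrt (1 + eta ^+ 2 * l) * norm2 (row_mx th' om')
    <= norm2 (row_mx th om) + eta * alpha.
Proof.
move=> l_ge0 eta_ge0 lC lCT g_le th'E om'E.
set w := row_mx (th' + eta *: (om' *m C^T)) (om' - eta *: (th' *m C)).
have wE : w = row_mx th om + eta *: row_mx (- gth) gom.
  rewrite scale_row_mx add_row_mx scalerN; congr row_mx.
    by rewrite {1}th'E scalerDr opprD addrA addrAC subrK.
  by rewrite {1}om'E scalerDr addrAC addrA subrK.
have w_le : norm2 w <= norm2 (row_mx th om) + eta * alpha.
  rewrite wE; apply: le_trans (norm2D _ _) _; rewrite lerD2l norm2Z ger0_norm //.
  apply: ler_wpM2l => //; apply: le_trans g_le.
  by rewrite !norm2E !vdot_row_mx vdotNl vdotNr opprK.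
apply: le_trans w_le; rewrite !norm2E -sqrtrM ?addr_ge0 ?mulr_ge0 ?sqr_ge0 //.
rewrite ler_sqrt ?vdot_ge0 // vdot_skew_step vdot_row_mx.
have := lC th'; have := lCT om'; have := sqr_ge0 eta; nra.
Qed.

Lemma limn_esup_le_cvg0 (R : realType) (u w : nat -> R) (B : R) :
  (forall t, u t <= B + w t) -> (w @ \oo --> 0)%classic ->
  (limn_esup (fun t => (u t)%:E) <= B%:E)%E.
Proof.
move=> u_le w0; apply/lee_addgt0Pr => e e0.
have [N _ w_lt] := cvgr0_norm_lt w w0 e e0.
apply: le_trans (ereal_inf_lbound _) _.
  by exists [set k | (N <= k)%N]%classic => //=; exists N.
apply: ge_ereal_sup => _ [k Nk <-]; rewrite -EFinD lee_fin.
by apply: le_trans (u_le k) _; rewrite lerD2l (le_trans (ler_norm _)) // ltW // w_lt.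
Qed.

Lemma limn_esup_le_contraction (R : realType) (u : nat -> R) (q b : R) :
  1 < q -> (forall t, q * u t.+1 <= u t + b) ->
  (limn_esup (fun t => (u t)%:E) <= (b / (q - 1))%:E)%E.
Proof.
move=> q_gt1 step; set B := b / (q - 1); have q_gt0 := lt_trans ltr01 q_gt1.
have B_fix : B + b = q * B by rewrite /B; field; rewrite subr_eq0 gt_eqF.
apply: (@limn_esup_le_cvg0 _ _ (fun t => (u 0%N - B) * q^-1 ^+ t)) => [t|].
  elim: t => [|t IH]; first by rewrite expr0 mulr1 addrC subrK.
  rewrite -(ler_pM2l q_gt0); apply: le_trans (step t) _.
  have -> : q * (B + (u 0%N - B) * q^-1 ^+ t.+1) = q * B + (u 0%N - B) * q^-1 ^+ t.
    by rewrite exprS; field; rewrite gt_eqF.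
  lra.
have z_lt1 : `|q^-1| < 1 by rewrite ger0_norm ?invr_ge0 ?ltW // invf_lt1.
by rewrite -[0](mulr0 (u 0%N - B)); exact: cvgMl_tmp (cvg_expr z_lt1).
Qed.

Lemma sqrt1D_gt1 (R : rcfType) (x : R) : 0 < x -> 1 < Num.sqrt (1 + x).
Proof.
move=> x_gt0; have x1_gt1 : 1 < 1 + x by rewrite ltrDl.
by rewrite -[X in X < _]sqrtr1 ltr_sqrt // (lt_trans ltr01).
Qed.

Lemma ntk_rate_ge0 (R : realType) (r : R) (m H : nat) : 0 <= ntk_rate r m H.
Proof. by rewrite /ntk_rate !mulr_ge0 ?powR_ge0 ?sqrtr_ge0. Qed.

Lemma implicit_update_radius_le (R : realType) (eta lmin lmax : R) :
  0 < lmin -> lmin <= lmax -> eta = 1 / Num.sqrt lmax ->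
  eta / (Num.sqrt (1 + eta ^+ 2 * lmin) - 1)
    <= 1 / (1 - 1 / Num.sqrt 2) * (Num.sqrt lmax / lmin).
Proof.
move=> lmin_gt0 lmin_le etaE; set s := Num.sqrt lmax; set q := Num.sqrt _.
set r2 := Num.sqrt 2.
have lmax_gt0 : 0 < lmax := lt_le_trans lmin_gt0 lmin_le.
have s_gt0 : 0 < s by rewrite sqrtr_gt0.
have eta_s : eta * s = 1 by rewrite etaE mul1r mulVf ?gt_eqF.
have eta2_lmax : eta ^+ 2 * lmax = 1.
  by rewrite -[lmax]sqr_sqrtr ?ltW // -/s -exprMn eta_s expr1n.
have eta_gt0 : 0 < eta by rewrite etaE divr_gt0.
have q_sqr : q ^+ 2 = 1 + eta ^+ 2 * lmin.
  by rewrite sqr_sqrtr // addr_ge0 ?mulr_ge0 ?sqr_ge0 ?ltW.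
have q_gt1 : 1 < q by rewrite sqrt1D_gt1 // mulr_gt0 ?exprn_gt0.
have q_le_r2 : q <= r2.
  rewrite ler_sqrt // -[2]/(1 + 1) lerD2l -eta2_lmax.
  by rewrite ler_wpM2l ?sqr_ge0.
have r2_sqr : r2 ^+ 2 = 2 by rewrite sqr_sqrtr.
have r2_gt1 : 1 < r2 by rewrite -[X in X < _]sqrtr1 ltr_sqrt ?ltr1n.
have r2_le : r2 + 1 <= 1 / (1 - 1 / r2).
  rewrite ler_pdivlMr ?subr_gt0 ?ltr_pdivrMr ?mul1r ?(lt_trans ltr01) //.
  have r2_inv : r2 * r2^-1 = 1 by rewrite mulfV ?gt_eqF ?(lt_trans ltr01).
  have r2_inv_lt1 : r2^-1 < 1 by rewrite invf_lt1 ?(lt_trans ltr01).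
  nra.
have q_sub1 : q - 1 != 0 by rewrite subr_eq0 gt_eqF.
have q_add1 : q + 1 != 0 by rewrite gt_eqF // addr_gt0 // (lt_trans ltr01).
have q21 : (q - 1) * (q + 1) = eta ^+ 2 * lmin.
  by rewrite -subr_sqr expr1n q_sqr addrAC subrr add0r.
have -> : eta / (q - 1) = (q + 1) * (s / lmin).
  have -> : eta / (q - 1) = eta * (q + 1) / ((q - 1) * (q + 1)).
    by field; rewrite q_sub1 q_add1.
  have s_inv : s = eta^-1 by rewrite etaE div1r invrK.
  by rewrite q21 s_inv; field; rewrite !gt_eqF.
rewrite ler_wpM2r ?divr_ge0 ?(ltW s_gt0) ?(ltW lmin_gt0) //.
by apply: le_trans r2_le; rewrite lerD2r.
Qed.

Theorem theorem1 (R : realType) (c : R) (hc : 0 < c) :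
  exists K : R, 0 < K /\
  forall (n : nat) (C : 'M[R]_n) (U' : 'rV[R]_n -> 'rV[R]_n -> R)
         (r : R) (m H : nat) (lmax lmin : R)
         (theta omega : nat -> 'rV[R]_n),
    C \in unitmx ->
    is_lambda_max (C *m C^T) lmax ->
    is_lambda_min (C *m C^T) lmin ->
    0 < r -> (0 < m)%N -> (0 < H)%N ->
    (forall p : 'rV[R]_n * 'rV[R]_n,
        differentiable (fun q : 'rV[R]_n * 'rV[R]_n => U' q.1 q.2) p) ->
    (forall t : nat,
        norm2 (row_mx (grad_theta U' (theta t.+1) (omega t.+1))
                      (grad_omega U' (theta t.+1) (omega t.+1)))
          <= c * ntk_rate r m H) ->
    (forall t : nat,
        theta t.+1 = theta t - (1 / Num.sqrt lmax) *:
                       grad_theta (utility C U') (theta t.+1) (omega t.+1) /\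
        omega t.+1 = omega t + (1 / Num.sqrt lmax) *:
                       grad_omega (utility C U') (theta t.+1) (omega t.+1)) ->
    (limn_esup (fun t => (norm2 (row_mx (theta t) (omega t)))%:E)
      <= (K * (1 / (1 - 1 / Num.sqrt 2)) * ntk_rate r m H
            * (Num.sqrt lmax / lmin))%:E)%E.
Proof.
exists c; split=> // n C U' r m H lmax lmin theta omega C_unit [_ lmax_max] lmin_min
  _ _ _ dU grad_le iu.
have [lmin_gt0 lmin_C lmin_CT] := lambda_min_gram C_unit lmin_min.
have lmin_le_lmax : lmin <= lmax := lmax_max _ lmin_min.1.
set eta := 1 / Num.sqrt lmax; set alpha := c * ntk_rate r m H.
have eta_gt0 : 0 < eta by rewrite divr_gt0 // sqrtr_gt0 (lt_le_trans lmin_gt0).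
have step t :
    Num.sqrt (1 + eta ^+ 2 * lmin) * norm2 (row_mx (theta t.+1) (omega t.+1))
      <= norm2 (row_mx (theta t) (omega t)) + eta * alpha.
  have [th_next om_next] := iu t.
  rewrite grad_theta_utility // in th_next; rewrite grad_omega_utility // in om_next.
  exact: implicit_update_contraction (ltW lmin_gt0) (ltW eta_gt0) lmin_C lmin_CT
    (grad_le t) th_next om_next.
have q_gt1 := sqrt1D_gt1 (mulr_gt0 (exprn_gt0 2 eta_gt0) lmin_gt0).
apply: le_trans (limn_esup_le_contraction q_gt1 step) _; rewrite lee_fin.
rewrite mulrAC mulrC -/alpha.
have -> : c * (1 / (1 - 1 / Num.sqrt 2)) * ntk_rate r m H * (Num.sqrt lmax / lmin)
          = alpha * (1 / (1 - 1 / Num.sqrt 2) * (Num.sqrt lmax / lmin)).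
  by rewrite /alpha; ring.
rewrite ler_wpM2l ?(mulr_ge0 (ltW hc) (ntk_rate_ge0 _ _ _)) //.
exact: implicit_update_radius_le.
Qed.
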